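(* For every $l\in\mathbb Z/n\mathbb Z$, the generating series satisfy $b'_l(u)=b_l(u+d_l)$ in $\mathcal Y_{\underline d}[[u^{-1}]]$, where $b_l(u+d_l)=\sum_{s\ge0}b_{l,s}(u+d_l)^{-s-1}$ is expanded in powers of $u^{-1}$.
   Context: Fix $n\ge1$, nonnegative integers $\underline d=(d_l)_{l\in\mathbb Z/n\mathbb Z}$. Let $\mathfrak a_{\underline d}$ be the Lie algebra with basis $e_{l,ij},e'_{l,ij}$ ($1\le i,j\le d_l$), $q_{l,i},p_{l,i}$ ($1\le i\le d_l$), $f_{l,ij}$ ($1\le i\le d_{l+1}$, $1\le j\le d_l$), $l\in\mathbb Z/n\mathbb Z$, with brackets $[e_{l,ij},e_{l,km}]=\delta_{jk}e_{l,im}-\delta_{im}e_{l,kj}$ and likewise for $e'$; $[e_{l,ij},q_{l,k}]=\delta_{jk}q_{l,i}$; $[e'_{l,ij},p_{l,k}]=-\delta_{ki}p_{l,j}$; $[q_{l,j},p_{l+1,i}]=f_{l,ij}$; $[e_{l,ij},f_{l,mk}]=\delta_{jk}f_{l,mi}$; $[e'_{l+1,ij},f_{l,mk}]=-\delta_{mi}f_{l,jk}$; all other brackets zero. Let $R\subset U(\mathfrak a_{\underline d})$ be spanned by $\sum_{m=1}^{d_l}e_{l,mj}f_{l,im}+\sum_{m=1}^{d_{l+1}}f_{l,mj}e'_{l+1,im}+\tfrac12(p_{l+1,i}q_{l,j}+q_{l,j}p_{l+1,i})$, and $\mathfrak{gl}(V_{\underline d})_{\rm diag}$ be spanned by $e_{l,ij}+e'_{l,ij}$;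 $\mathcal Y_{\underline d}:=\big(U(\mathfrak a_{\underline d})/U(\mathfrak a_{\underline d})(R+\mathfrak{gl}(V_{\underline d})_{\rm diag})\big)^{\mathfrak{gl}(V_{\underline d})_{\rm diag}}$. Let $b_{l,s}$ be the image of $\sum p_{l,i_1}e_{l,i_1i_2}\cdots e_{l,i_si_{s+1}}q_{l,i_{s+1}}$, $b'_{l,s}$ the image of $(-1)^s\sum p_{l,i_1}e'_{l,i_1i_2}\cdots e'_{l,i_si_{s+1}}q_{l,i_{s+1}}$ ($s\ge0$), and $b_l(u)=\sum_{s\ge0}b_{l,s}u^{-s-1}$, $b'_l(u)=\sum_{s\ge0}b'_{l,s}u^{-s-1}$. *)

From HB Require Import structures.
From mathcomp Require Import all_boot all_order all_algebra.
Set Implicit Arguments. Unset Strict Implicit. Unset Printing Implicit Defensive.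
Import Order.TTheory GRing.Theory Num.Theory.
Local Open Scope ring_scope.

(* Basis of the Lie algebra a_d.  Indices i, j are 0-based naturals; the   *)
(* component index l lives in 'I_n (= Z/nZ, with successor ordS).         *)
Inductive gen (n : nat) : Type :=
| GE  of 'I_n & nat & nat
| GE' of 'I_n & nat & nat
| GQ  of 'I_n & nat
| GP  of 'I_n & nat
| GF  of 'I_n & nat & nat.    (* f_{l,ij}, i < d_{l+1}, j < d_l *)

Definition valid_gen (n : nat) (d : 'I_n -> nat) (g : gen n) : bool :=
  match g with
  | GE l i j => (i < d l)%N && (j < d l)%N
  | GE' l i j => (i < d l)%N && (j < d l)%N
  | GQ l i => (i < d l)%N
  | GP l i => (i < d l)%N
  | GF l i j => (i < d (ordS l))%N && (j < d l)%N
  end.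

(* Syntactic expressions of the free associative K-algebra on gen n. *)
Inductive expr (K : Type) (G : Type) : Type :=
| EX  of G
| EC  of K
| EAdd of expr K G & expr K G
| EMul of expr K G & expr K G.

Arguments EX {K G}. Arguments EC {K G}. Arguments EAdd {K G}. Arguments EMul {K G}.

Section Exprs.
Variables (K : fieldType) (G : Type).
Notation ex := (expr K G).

Definition eneg (x : ex) : ex := EMul (EC (-1)) x.
Definition esub (x y : ex) : ex := EAdd x (eneg y).
Definition esum (m : nat) (f : nat -> ex) : ex :=
  foldr (fun i acc => EAdd (f i) acc) (EC 0) (iota 0 m).

(* The congruence on expressions generated by the axioms of an associative *)
(* unital K-algebra together with extra relations [rel]: [aeq rel x y] iff  *)
(* x and y are equal in the free K-algebra on G modulo the two-sided ideal  *)
(* generated by the differences x - y with rel x y.                        *)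
Inductive aeq (rel : ex -> ex -> Prop) : ex -> ex -> Prop :=
| aeq_refl x : aeq rel x x
| aeq_sym x y : aeq rel x y -> aeq rel y x
| aeq_trans x y z : aeq rel x y -> aeq rel y z -> aeq rel x z
| aeq_add x x' y y' : aeq rel x x' -> aeq rel y y' -> aeq rel (EAdd x y) (EAdd x' y')
| aeq_mul x x' y y' : aeq rel x x' -> aeq rel y y' -> aeq rel (EMul x y) (EMul x' y')
| aeq_addA x y z : aeq rel (EAdd x (EAdd y z)) (EAdd (EAdd x y) z)
| aeq_addC x y : aeq rel (EAdd x y) (EAdd y x)
| aeq_add0 x : aeq rel (EAdd (EC 0) x) x
| aeq_addN x : aeq rel (EAdd x (eneg x)) (EC 0)
| aeq_mulA x y z : aeq rel (EMul x (EMul y z)) (EMul (EMul x y) z)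
| aeq_mul1l x : aeq rel (EMul (EC 1) x) x
| aeq_mul1r x : aeq rel (EMul x (EC 1)) x
| aeq_mulDl x y z : aeq rel (EMul (EAdd x y) z) (EAdd (EMul x z) (EMul y z))
| aeq_mulDr x y z : aeq rel (EMul x (EAdd y z)) (EAdd (EMul x y) (EMul x z))
| aeq_cadd a b : aeq rel (EAdd (EC a) (EC b)) (EC (a + b))
| aeq_cmul a b : aeq rel (EMul (EC a) (EC b)) (EC (a * b))
| aeq_ccomm a x : aeq rel (EMul (EC a) x) (EMul x (EC a))
| aeq_rel x y : rel x y -> aeq rel x y.

(* Equality in the left module A / A.S, where A = free algebra / (aeq rel) *)
(* and A.S is the left ideal generated by the elements s with S s.          *)
Inductive meq (rel : ex -> ex -> Prop) (S : ex -> Prop) : ex -> ex -> Prop :=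
| meq_aeq x y : aeq rel x y -> meq rel S x y
| meq_sym x y : meq rel S x y -> meq rel S y x
| meq_trans x y z : meq rel S x y -> meq rel S y z -> meq rel S x z
| meq_add x x' y y' : meq rel S x x' -> meq rel S y y' -> meq rel S (EAdd x y) (EAdd x' y')
| meq_lmul z x y : meq rel S x y -> meq rel S (EMul z x) (EMul z y)
| meq_gen s : S s -> meq rel S s (EC 0).
End Exprs.

Section Ad.
Variables (K : fieldType) (n : nat) (d : 'I_n -> nat).
Notation ex := (expr K (gen n)).
Local Notation X := (@EX K (gen n)).
Local Notation C := (@EC K (gen n)).

Definition kd (b : bool) (x : ex) : ex := if b then x else C 0.

(* The brackets listed in the paper (in the given order of arguments). *)
Definition br0 (g h : gen n) : option ex :=
  match g, h with
  | GE l i j, GE l' k m =>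
      if l == l' then Some (esub (kd (j == k) (X (GE l i m))) (kd (i == m) (X (GE l k j))))
      else None
  | GE' l i j, GE' l' k m =>
      if l == l' then Some (esub (kd (j == k) (X (GE' l i m))) (kd (i == m) (X (GE' l k j))))
      else None
  | GE l i j, GQ l' k =>
      if l == l' then Some (kd (j == k) (X (GQ l i))) else None
  | GE' l i j, GP l' k =>
      if l == l' then Some (kd (k == i) (eneg (X (GP l j)))) else None
  | GQ l j, GP l' i =>
      if l' == ordS l then Some (X (GF l i j)) else None
  | GE l i j, GF l' m k =>
      if l == l' then Some (kd (j == k) (X (GF l m i))) else None
  | GE' l i j, GF l' m k =>
      if l == ordS l' then Some (kd (m == i) (eneg (X (GF l' j k)))) else None
  | _, _ => None
  end.

(* The Lie bracket of basis elements; missing pairs are obtained by       *)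
(* antisymmetry, "all other brackets zero".                                *)
Definition br (g h : gen n) : ex :=
  match br0 g h with
  | Some e => e
  | None => match br0 h g with Some e => eneg e | None => C 0 end
  end.

(* Defining relations of U(a_d): xy - yx = [x,y] for basis elements x, y; *)
(* symbols not corresponding to basis elements are set to zero.            *)
Inductive Urel : ex -> ex -> Prop :=
| Urel_br g h : valid_gen d g -> valid_gen d h ->
    Urel (esub (EMul (X g) (X h)) (EMul (X h) (X g))) (br g h)
| Urel_invalid g : ~~ valid_gen d g -> Urel (X g) (C 0).

(* Spanning set of R + gl(V_d)_diag. *)
Inductive Sgen : ex -> Prop :=
| Sgen_R (l : 'I_n) i j : (i < d (ordS l))%N -> (j < d l)%N ->
    Sgen (EAdd (EAdd
       (esum (d l) (fun m => EMul (X (GE l m j)) (X (GF l i m))))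
       (esum (d (ordS l)) (fun m => EMul (X (GF l m j)) (X (GE' (ordS l) i m)))))
       (EMul (C 2%:R^-1) (EAdd (EMul (X (GP (ordS l) i)) (X (GQ l j)))
                               (EMul (X (GQ l j)) (X (GP (ordS l) i))))))
| Sgen_diag (l : 'I_n) i j : (i < d l)%N -> (j < d l)%N ->
    Sgen (EAdd (X (GE l i j)) (X (GE' l i j))).

(* Equality in U(a_d) / U(a_d)(R + gl(V_d)_diag). *)
Definition Yeq (x y : ex) : Prop := meq Urel Sgen x y.

Fixpoint btail (Ex : nat -> nat -> gen n) (l : 'I_n) (s i : nat) : ex :=
  match s with
  | 0 => X (GQ l i)
  | s'.+1 => esum (d l) (fun k => EMul (X (Ex i k)) (btail Ex l s' k))
  end.

(* b_{l,s} = \sum p_{l,i_1} e_{l,i_1 i_2} ... e_{l,i_s i_{s+1}} q_{l,i_{s+1}} *)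
Definition bexpr (l : 'I_n) (s : nat) : ex :=
  esum (d l) (fun i => EMul (X (GP l i)) (btail (fun a b => GE l a b) l s i)).

(* b'_{l,s} = (-1)^s \sum p_{l,i_1} e'_{l,i_1 i_2} ... e'_{l,i_s i_{s+1}} q_{l,i_{s+1}} *)
Definition bexpr' (l : 'I_n) (s : nat) : ex :=
  EMul (C ((-1) ^+ s))
    (esum (d l) (fun i => EMul (X (GP l i)) (btail (fun a b => GE' l a b) l s i))).

(* Coefficient of u^{-s-1} in (u + c)^{-t-1}, expanded in powers of u^{-1}:*)
(* (u+c)^{-t-1} = \sum_{m>=0} binom(-t-1, m) c^m u^{-t-1-m}, so it is      *)
(* binom(-t-1, s-t) c^{s-t} = (-1)^{s-t} binom(s, t) c^{s-t} if t <= s,   *)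
(* and 0 otherwise.                                                        *)
Definition shift_coef (c : K) (t s : nat) : K :=
  if (t <= s)%N then (-1) ^+ (s - t) * ('C(s, t))%:R * c ^+ (s - t) else 0.

(* Coefficient of u^{-s-1} in b_l(u + d_l) = \sum_t b_{l,t} (u+d_l)^{-t-1}; *)
(* only t <= s contribute.                                                 *)
Definition bshift_coef (l : 'I_n) (s : nat) : ex :=
  esum s.+1 (fun t => EMul (C (shift_coef (d l)%:R t s)) (bexpr l t)).

End Ad.

From mathcomp Require Import all_boot all_order all_algebra.
From Stdlib Require Import Setoid Morphisms.
From mathcomp Require Import ring.
Set Implicit Arguments. Unset Strict Implicit. Unset Printing Implicit Defensive.
Import GRing.Theory.
Local Open Scope ring_scope.

(** Write [D = d_l], [E w] for the vector [i |-> sum_k e_{l,ik} w_k] and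
    [W_s = (D - E)^s q].  Peeling off the leftmost [e'] of [p e' ... e' q], moving it to the
    right of the remaining word (it commutes with all [e_{l,..}] and
    [q_{l,..}]) and replacing it by [-e], one gets by induction on [s]
      [sum_i y_i (e' ... e' q)_i = sum_i y_i W_{s,i}]   for any [y_i],
    because [W_s] transforms as a vector under [gl_D], so that
    [sum_j W_{s,j} e_{ij} = (E W_s)_i - D W_{s,i}].  Expanding [(D - E)^s] by
    the binomial theorem gives [sum_t (-1)^t C(s,t) D^(s-t) E^t q], and
    [p E^t q] is [b_{l,t}]; the sign [(-1)^s] of [b'_{l,s}] turns these
    coefficients into those of [(u + D)^{-t-1}]. *)

#[export] Instance aeq_equiv (K : fieldType) G rel : Equivalence (@aeq K G rel).
Proof. split; [exact: aeq_refl | exact: aeq_sym | exact: aeq_trans]. Qed.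
#[export] Hint Resolve aeq_refl : core.
#[export] Instance EAdd_proper (K : fieldType) G rel :
  Proper (aeq rel ==> aeq rel ==> aeq rel) (@EAdd K G).
Proof. by move=> x x' ? y y' ?; apply: aeq_add. Qed.
#[export] Instance EMul_proper (K : fieldType) G rel :
  Proper (aeq rel ==> aeq rel ==> aeq rel) (@EMul K G).
Proof. by move=> x x' ? y y' ?; apply: aeq_mul. Qed.

#[export] Instance eneg_proper (K : fieldType) G rel :
  Proper (aeq rel ==> aeq rel) (@eneg K G).
Proof. by move=> x x' xx'; rewrite /eneg xx'. Qed.

#[export] Instance meq_equiv (K : fieldType) G rel S : Equivalence (@meq K G rel S).
Proof.
split; [by move=> x; apply/meq_aeq/aeq_refl | exact: meq_sym | exact: meq_trans].
Qed.
#[export] Instance EAdd_mproper (K : fieldType) G rel S :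
  Proper (meq rel S ==> meq rel S ==> meq rel S) (@EAdd K G).
Proof. by move=> x x' ? y y' ?; apply: meq_add. Qed.
#[export] Instance aeq_meq_subrelation (K : fieldType) G rel S :
  subrelation (aeq rel) (@meq K G rel S).
Proof. by move=> x y; apply: meq_aeq. Qed.

Section ExprAlgebra.
Context {K : fieldType} {G : Type} {rel : expr K G -> expr K G -> Prop}.
Local Notation ex := (expr K G).
Local Notation C := (@EC K G).
Local Notation "x ~ y" := (aeq rel x y) (at level 70).

Lemma eaddr0 (x : ex) : EAdd x (C 0) ~ x.
Proof. by rewrite aeq_addC aeq_add0. Qed.
Lemma eaddNl (x : ex) : EAdd (eneg x) x ~ C 0.
Proof. by rewrite aeq_addC aeq_addN. Qed.
Lemma eaddCA (x y z : ex) : EAdd x (EAdd y z) ~ EAdd y (EAdd x z).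
Proof. by rewrite aeq_addA (aeq_addC _ x y) -aeq_addA. Qed.
Lemma eaddACA (x y z w : ex) :
  EAdd (EAdd x y) (EAdd z w) ~ EAdd (EAdd x z) (EAdd y w).
Proof. by rewrite -!aeq_addA (eaddCA y z). Qed.

Lemma esub_eq_add (x y z : ex) : esub x y ~ z -> x ~ EAdd y z.
Proof. by move=> <-; rewrite /esub eaddCA aeq_addN eaddr0. Qed.
Lemma eadd_eq_sub (x y z : ex) : x ~ EAdd y z -> y ~ EAdd x (eneg z).
Proof. by move=> ->; rewrite -aeq_addA aeq_addN eaddr0. Qed.

Lemma emul0r (x : ex) : EMul (C 0) x ~ C 0.
Proof.
have twice : EMul (C 0) x ~ EAdd (EMul (C 0) x) (EMul (C 0) x).
  by rewrite -aeq_mulDl aeq_cadd addr0.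
transitivity (EAdd (EMul (C 0) x) (EAdd (EMul (C 0) x) (eneg (EMul (C 0) x)))).
  by rewrite aeq_addN eaddr0.
by rewrite aeq_addA -twice aeq_addN.
Qed.
Lemma emulr0 (x : ex) : EMul x (C 0) ~ C 0.
Proof. by rewrite -aeq_ccomm emul0r. Qed.

Lemma emulCA a (x y : ex) : EMul x (EMul (C a) y) ~ EMul (C a) (EMul x y).
Proof. by rewrite aeq_mulA -aeq_ccomm -aeq_mulA. Qed.
Lemma emulCC a b (x : ex) : EMul (C a) (EMul (C b) x) ~ EMul (C (a * b)) x.
Proof. by rewrite aeq_mulA aeq_cmul. Qed.
Lemma emulCD a b (x : ex) :
  EAdd (EMul (C a) x) (EMul (C b) x) ~ EMul (C (a + b)) x.
Proof. by rewrite -aeq_mulDl aeq_cadd. Qed.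

Lemma enegD (x y : ex) : eneg (EAdd x y) ~ EAdd (eneg x) (eneg y).
Proof. exact: aeq_mulDr. Qed.
Lemma enegK (x : ex) : eneg (eneg x) ~ x.
Proof. by rewrite /eneg emulCC mulrNN mulr1 aeq_mul1l. Qed.
Lemma enegC a (x : ex) : eneg (EMul (C a) x) ~ EMul (C (- a)) x.
Proof. by rewrite /eneg emulCC mulN1r. Qed.
Lemma emulNr (x y : ex) : EMul x (eneg y) ~ eneg (EMul x y).
Proof. exact: emulCA. Qed.
Lemma emulNl (x y : ex) : EMul (eneg x) y ~ eneg (EMul x y).
Proof. by rewrite -aeq_mulA. Qed.

Lemma esumS m (f : nat -> ex) : esum m.+1 f = EAdd (f 0%N) (esum m (fun i => f i.+1)).
Proof. by rewrite /esum /= -(addn0 1%N) iotaDl foldr_map. Qed.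

Lemma eq_esum m (f g : nat -> ex) :
  (forall i, (i < m)%N -> f i ~ g i) -> esum m f ~ esum m g.
Proof.
elim: m f g => [|m IH] f g fg; first reflexivity.
by rewrite !esumS (fg 0%N) // (IH _ (fun i => g i.+1)) => [|i ?]; last apply: fg.
Qed.

Lemma esum_recr m (f : nat -> ex) : esum m.+1 f ~ EAdd (esum m f) (f m).
Proof.
elim: m f => [|m IH] f; first by rewrite !esumS eaddr0 aeq_add0.
by rewrite esumS IH esumS aeq_addA.
Qed.

Lemma esumD m (f g : nat -> ex) :
  esum m (fun i => EAdd (f i) (g i)) ~ EAdd (esum m f) (esum m g).
Proof.
elim: m f g => [|m IH] f g; first by rewrite eaddr0.
by rewrite !esumS IH eaddACA.
Qed.

Lemma emul_sumr m (x : ex) (f : nat -> ex) :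
  EMul x (esum m f) ~ esum m (fun i => EMul x (f i)).
Proof.
elim: m f => [|m IH] f; first exact: emulr0.
by rewrite !esumS aeq_mulDr IH.
Qed.

Lemma emul_suml m (x : ex) (f : nat -> ex) :
  EMul (esum m f) x ~ esum m (fun i => EMul (f i) x).
Proof.
elim: m f => [|m IH] f; first exact: emul0r.
by rewrite !esumS aeq_mulDl IH.
Qed.

Lemma eneg_sum m (f : nat -> ex) : eneg (esum m f) ~ esum m (fun i => eneg (f i)).
Proof. exact: emul_sumr. Qed.

Lemma esum_eq0 m (f : nat -> ex) :
  (forall i, (i < m)%N -> f i ~ C 0) -> esum m f ~ C 0.
Proof.
move=> f0; transitivity (esum m (fun=> C 0)); first exact: eq_esum.
by elim: m {f0} => [|m IH]; rewrite ?esumS ?IH ?aeq_add0.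
Qed.

Lemma exchange_esum m k (f : nat -> nat -> ex) :
  esum m (fun i => esum k (f i)) ~ esum k (fun j => esum m (fun i => f i j)).
Proof.
elim: m f => [|m IH] f; first by symmetry; apply: esum_eq0.
by rewrite esumS IH -esumD; apply: eq_esum => j _; rewrite esumS.
Qed.

Lemma esum_const m (x : ex) : esum m (fun=> x) ~ EMul (C m%:R) x.
Proof.
elim: m => [|m IH]; first by rewrite emul0r.
by rewrite esumS IH -{1}(aeq_mul1l _ x) emulCD -natr1 addrC.
Qed.

Definition ecomm (x y : ex) : Prop := EMul x y ~ EMul y x.

Lemma ecommD x y z : ecomm x y -> ecomm x z -> ecomm x (EAdd y z).
Proof. by rewrite /ecomm => xy xz; rewrite aeq_mulDr aeq_mulDl xy xz. Qed.
Lemma ecommM x y z : ecomm x y -> ecomm x z -> ecomm x (EMul y z).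
Proof. by rewrite /ecomm => xy xz; rewrite aeq_mulA xy -aeq_mulA xz aeq_mulA. Qed.
Lemma ecommC x a : ecomm x (C a).
Proof. by rewrite /ecomm aeq_ccomm. Qed.
Lemma ecommN x y : ecomm x y -> ecomm x (eneg y).
Proof. by move=> xy; apply: ecommM => //; apply: ecommC. Qed.
Lemma ecomm_sum x m f : (forall i, (i < m)%N -> ecomm x (f i)) -> ecomm x (esum m f).
Proof.
elim: m f => [|m IH] f xf; first exact: ecommC.
by rewrite esumS; apply: ecommD; [apply: xf | apply: IH => i ?; apply: xf].
Qed.

Context {S : ex -> Prop}.

Lemma meq_esum m (f g : nat -> ex) :
  (forall i, (i < m)%N -> meq rel S (f i) (g i)) -> meq rel S (esum m f) (esum m g).
Proof.
elim: m f g => [|m IH] f g fg; first reflexivity.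
by rewrite !esumS; apply: meq_add; [apply: fg | apply: IH => i ?; apply: fg].
Qed.

End ExprAlgebra.

Arguments ecomm {K G} rel x y.

#[export] Instance esum_proper (K : fieldType) G rel m :
  Proper (pointwise_relation nat (aeq rel) ==> aeq rel) (@esum K G m).
Proof. by move=> f g fg; apply: eq_esum. Qed.

Section KroneckerDelta.
Context {K : fieldType} {n : nat} {rel : expr K (gen n) -> expr K (gen n) -> Prop}.
Local Notation ex := (expr K (gen n)).
Local Notation "x ~ y" := (aeq rel x y) (at level 70).

Lemma kd_mull b (x y : ex) : EMul x (kd b y) ~ kd b (EMul x y).
Proof. by case: b => /=; [reflexivity | apply: emulr0]. Qed.
Lemma kd_mulr b (x y : ex) : EMul (kd b y) x ~ kd b (EMul y x).
Proof. by case: b => /=; [reflexivity | apply: emul0r]. Qed.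
Lemma kdD b (x y : ex) : kd b (EAdd x y) ~ EAdd (kd b x) (kd b y).
Proof. by case: b => /=; [reflexivity | rewrite aeq_add0]. Qed.
Lemma esum_kd_const m b (f : nat -> ex) : esum m (fun j => kd b (f j)) ~ kd b (esum m f).
Proof. by case: b => /=; [reflexivity | apply: esum_eq0]. Qed.

Lemma esum_kd m c (f : nat -> ex) : (c < m)%N -> esum m (fun j => kd (c == j) (f j)) ~ f c.
Proof.
elim: m => [|m IH] // cm; rewrite esum_recr /=.
case: (ltngtP c m) cm => [c_lt_m _ | m_lt_c | -> _].
- by rewrite IH // eaddr0.
- by rewrite ltnS leqNgt m_lt_c.
- by rewrite esum_eq0 ?aeq_add0 // => i /gtn_eqF ->.
Qed.

End KroneckerDelta.

Section ShiftIdentity.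
Variables (K : fieldType) (n : nat) (d : 'I_n -> nat) (l : 'I_n).
Local Notation ex := (expr K (gen n)).
Local Notation "x ~ y" := (aeq (Urel d) x y) (at level 70).
Local Notation C := (@EC K (gen n)).
Local Notation X := (@EX K (gen n)).
Local Notation D := (d l).
Local Notation e a b := (X (GE l a b)).
Local Notation e' a b := (X (GE' l a b)).

Lemma emulX_swap g h : valid_gen d g -> valid_gen d h ->
  EMul (X g) (X h) ~ EAdd (EMul (X h) (X g)) (br K g h).
Proof. by move=> vg vh; apply/esub_eq_add/aeq_rel/Urel_br. Qed.

Lemma valid_e a b : (a < D)%N -> (b < D)%N -> valid_gen d (GE l a b).
Proof. by move=> /= -> ->. Qed.
Lemma valid_e' a b : (a < D)%N -> (b < D)%N -> valid_gen d (GE' l a b).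
Proof. by move=> /= -> ->. Qed.

Lemma e_q_swap a b c : (a < D)%N -> (b < D)%N -> (c < D)%N ->
  EMul (e a b) (X (GQ l c)) ~ EAdd (EMul (X (GQ l c)) (e a b)) (kd (b == c) (X (GQ l a))).
Proof. by move=> ha hb hc; rewrite emulX_swap ?valid_e // /br /= eqxx. Qed.

Lemma e_e_swap a b c x : (a < D)%N -> (b < D)%N -> (c < D)%N -> (x < D)%N ->
  EMul (e a b) (e c x) ~ EAdd (EMul (e c x) (e a b))
    (esub (kd (b == c) (e a x)) (kd (a == x) (e c b))).
Proof. by move=> ha hb hc hx; rewrite emulX_swap ?valid_e // /br /= eqxx. Qed.

Lemma ecomm_e'_q i j c : (i < D)%N -> (j < D)%N -> (c < D)%N ->
  ecomm (Urel d) (e' i j) (X (GQ l c)).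
Proof. by move=> hi hj hc; rewrite /ecomm emulX_swap ?valid_e' ?eaddr0. Qed.

Lemma ecomm_e'_e i j a b : (i < D)%N -> (j < D)%N -> (a < D)%N -> (b < D)%N ->
  ecomm (Urel d) (e' i j) (e a b).
Proof. by move=> hi hj ha hb; rewrite /ecomm emulX_swap ?valid_e' ?valid_e ?eaddr0. Qed.

Definition Eact (w : nat -> ex) (i : nat) : ex := esum D (fun k => EMul (e i k) (w k)).

Lemma eq_Eact w v : (forall i, w i ~ v i) -> forall i, Eact w i ~ Eact v i.
Proof. by move=> wv i; apply: esum_proper => k; rewrite wv. Qed.

Definition is_glvec (w : nat -> ex) : Prop :=
  forall a b c, (a < D)%N -> (b < D)%N -> (c < D)%N ->
  EMul (e a b) (w c) ~ EAdd (EMul (w c) (e a b)) (kd (b == c) (w a)).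

Lemma glvec_q : is_glvec (fun i => X (GQ l i)).
Proof. exact: e_q_swap. Qed.

Lemma glvecZ c w : is_glvec w -> is_glvec (fun i => EMul (C c) (w i)).
Proof.
by move=> vw a b x ha hb hx; rewrite emulCA vw // aeq_mulDr kd_mull aeq_mulA.
Qed.

Lemma glvecD w v : is_glvec w -> is_glvec v -> is_glvec (fun i => EAdd (w i) (v i)).
Proof.
by move=> vw vv a b x ha hb hx; rewrite aeq_mulDr vw // vv // kdD aeq_mulDl eaddACA.
Qed.

Lemma glvec_Eact w : is_glvec w -> is_glvec (Eact w).
Proof.
move=> vw a b c ha hb hc; rewrite /Eact emul_sumr.
transitivity (esum D (fun x =>
  EAdd (EAdd (EMul (EMul (e c x) (w x)) (e a b)) (kd (b == x) (EMul (e c x) (w a))))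
       (EAdd (kd (b == c) (EMul (e a x) (w x))) (eneg (kd (a == x) (EMul (e c b) (w x))))))).
  apply: eq_esum => x hx.
  rewrite aeq_mulA (e_e_swap ha hb hc hx) aeq_mulDl -aeq_mulA (vw a b x) //.
  by rewrite /esub aeq_mulDl emulNl !kd_mulr aeq_mulDr kd_mull aeq_mulA.
rewrite !esumD -emul_suml (esum_kd _ hb) esum_kd_const -eneg_sum (esum_kd _ ha).
by rewrite eaddACA aeq_addN eaddr0.
Qed.

(* [shiftq s] is [W_s = (D - E)^s q]. *)
Fixpoint shiftq (s : nat) : nat -> ex :=
  match s with
  | 0 => fun i => X (GQ l i)
  | s'.+1 => fun i => EAdd (EMul (C D%:R) (shiftq s' i)) (eneg (Eact (shiftq s') i))
  end.

Lemma glvec_shiftq s : is_glvec (shiftq s).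
Proof.
elim: s => [|s IH] /=; first exact: glvec_q.
by apply: glvecD; [apply: glvecZ | apply/(glvecZ (-1))/glvec_Eact].
Qed.

Lemma glvec_sum_mule w i : is_glvec w -> (i < D)%N ->
  esum D (fun j => EMul (w j) (e i j)) ~ EAdd (Eact w i) (eneg (EMul (C D%:R) (w i))).
Proof.
move=> vw hi.
transitivity (esum D (fun j => EAdd (EMul (e i j) (w j)) (eneg (w i)))).
  by apply: eq_esum => j hj; apply: eadd_eq_sub; rewrite vw // eqxx.
by rewrite esumD esum_const /eneg !emulCC mulrC.
Qed.

Lemma ecomm_e'_shiftq s i j k : (i < D)%N -> (j < D)%N -> (k < D)%N ->
  ecomm (Urel d) (e' i j) (shiftq s k).
Proof.
move=> hi hj; elim: s k => [|s IH] k hk /=; first exact: ecomm_e'_q.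
apply: ecommD; first by apply: ecommM; [apply: ecommC | apply: IH].
by apply/ecommN/ecomm_sum => x hx; apply: ecommM; [apply: ecomm_e'_e | apply: IH].
Qed.

Lemma Yeq_mul_e' (z : ex) i j : (i < D)%N -> (j < D)%N ->
  Yeq d (EMul z (e' i j)) (eneg (EMul z (e i j))).
Proof.
move=> hi hj; rewrite /Yeq.
have diag0 : meq (Urel d) (Sgen d) (EMul z (EAdd (e i j) (e' i j))) (EMul z (C 0)).
  exact/meq_lmul/meq_gen/Sgen_diag.
transitivity (EAdd (eneg (EMul z (e i j))) (EMul z (EAdd (e i j) (e' i j)))).
  by apply: meq_aeq; rewrite aeq_mulDr aeq_addA eaddNl aeq_add0.
by rewrite diag0 emulr0 eaddr0; reflexivity.
Qed.

Local Notation tail := (btail K d (fun a b => GE l a b) l).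
Local Notation tail' := (btail K d (fun a b => GE' l a b) l).

Lemma sum_mul_tail' s (y : nat -> ex) :
  Yeq d (esum D (fun i => EMul (y i) (tail' s i))) (esum D (fun i => EMul (y i) (shiftq s i))).
Proof.
rewrite /Yeq; elim: s y => [|s IHs] y /=; first reflexivity.
have -> : esum D (fun i => EMul (y i) (esum D (fun k => EMul (e' i k) (tail' s k))))
  ~ esum D (fun k => EMul (esum D (fun i => EMul (y i) (e' i k))) (tail' s k)).
  transitivity (esum D (fun i => esum D (fun k => EMul (EMul (y i) (e' i k)) (tail' s k)))).
    by apply: esum_proper => i; rewrite emul_sumr; apply: esum_proper => k; rewrite aeq_mulA.
  by rewrite exchange_esum; apply: esum_proper => k; rewrite emul_suml.
rewrite IHs.
have -> : esum D (fun k => EMul (esum D (fun i => EMul (y i) (e' i k))) (shiftq s k))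
  ~ esum D (fun i => esum D (fun k => EMul (EMul (y i) (shiftq s k)) (e' i k))).
  symmetry; rewrite exchange_esum; apply: eq_esum => k hk; rewrite emul_suml.
  apply: eq_esum => i hi.
  by rewrite -aeq_mulA -(ecomm_e'_shiftq s hi hk hk) aeq_mulA.
transitivity (esum D (fun i => esum D (fun k => eneg (EMul (EMul (y i) (shiftq s k)) (e i k))))).
  by apply: meq_esum => i hi; apply: meq_esum => k hk; apply: Yeq_mul_e'.
apply: meq_aeq; apply: eq_esum => i hi.
transitivity (eneg (EMul (y i) (esum D (fun k => EMul (shiftq s k) (e i k))))).
  by rewrite emul_sumr eneg_sum; apply: esum_proper => k; rewrite aeq_mulA.
by rewrite (glvec_sum_mule (glvec_shiftq s) hi) -emulNr enegD enegK aeq_addC.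
Qed.

Definition kappa (s t : nat) : K := (-1) ^+ t * 'C(s, t)%:R * D%:R ^+ (s - t).

Lemma kappa0S s : kappa s.+1 0 = D%:R * kappa s 0.
Proof. by rewrite /kappa !bin0 !subn0 exprS !mul1r. Qed.

Lemma kappa_small s : kappa s s.+1 = 0.
Proof. by rewrite /kappa bin_small // mulr0 mul0r. Qed.

Lemma kappaSS s t : kappa s.+1 t.+1 = D%:R * kappa s t.+1 - kappa s t.
Proof.
rewrite /kappa subSS binS natrD exprS.
case: (ltnP t s) => [lt_ts | le_st].
  by rewrite -(subnSK lt_ts) exprS; ring.
rewrite (bin_small (n := s) (m := t.+1)) ?ltnS //.
have /eqP -> : (s - t == 0)%N by rewrite subn_eq0.
have /eqP -> : (s - t.+1 == 0)%N by rewrite subn_eq0 leqW.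
ring.
Qed.

Lemma Eact_tail_comb m (c : nat -> K) i :
  Eact (fun k => esum m (fun t => EMul (C (c t)) (tail t k))) i
  ~ esum m (fun t => EMul (C (c t)) (tail t.+1 i)).
Proof.
rewrite /Eact; transitivity (esum D (fun k =>
  esum m (fun t => EMul (C (c t)) (EMul (e i k) (tail t k))))).
  by apply: esum_proper => k; rewrite emul_sumr; apply: esum_proper => t; rewrite emulCA.
by rewrite exchange_esum; apply: esum_proper => t; rewrite -emul_sumr.
Qed.

Lemma shiftqE s i : shiftq s i ~ esum s.+1 (fun t => EMul (C (kappa s t)) (tail t i)).
Proof.
elim: s i => [|s IH] i.
  by rewrite esumS /kappa expr0 bin0 !mul1r aeq_mul1l eaddr0.
rewrite /= IH (eq_Eact IH) Eact_tail_comb emul_sumr eneg_sum.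
transitivity (EAdd (esum s.+2 (fun t => EMul (C (D%:R * kappa s t)) (tail t i)))
                   (esum s.+1 (fun t => EMul (C (- kappa s t)) (tail t.+1 i)))).
  apply: EAdd_proper.
    rewrite (esum_recr s.+1) kappa_small mulr0 emul0r eaddr0.
    by apply: esum_proper => t; rewrite emulCC.
  by apply: esum_proper => t; rewrite enegC.
rewrite esumS -aeq_addA -esumD (esumS s.+1) kappa0S.
by apply: EAdd_proper => //; apply: esum_proper => t; rewrite emulCD kappaSS.
Qed.

Lemma shift_coef_kappa s t : (t <= s)%N -> (-1) ^+ s * kappa s t = shift_coef D%:R t s.
Proof.
move=> le_ts; rewrite /shift_coef le_ts /kappa -{1}(subnK le_ts) exprD.
rewrite -!mulrA; congr (_ * _).
by rewrite !mulrA -exprMn mulrNN mulr1 expr1n mul1r.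
Qed.

Lemma Yeq_bexpr'_shiftq s : Yeq d (@bexpr' K n d l s)
  (EMul (C ((-1) ^+ s)) (esum D (fun i => EMul (X (GP l i)) (shiftq s i)))).
Proof. exact: meq_lmul (sum_mul_tail' s (fun i => X (GP l i))). Qed.

Lemma sum_p_shiftqE s :
  EMul (C ((-1) ^+ s)) (esum D (fun i => EMul (X (GP l i)) (shiftq s i))) ~ @bshift_coef K n d l s.
Proof.
transitivity (EMul (C ((-1) ^+ s)) (esum D (fun i =>
  esum s.+1 (fun t => EMul (C (kappa s t)) (EMul (X (GP l i)) (tail t i)))))).
  apply: EMul_proper => //; apply: esum_proper => i.
  by rewrite shiftqE emul_sumr; apply: esum_proper => t; rewrite emulCA.
rewrite exchange_esum emul_sumr; apply: eq_esum => t lt_ts.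
by rewrite -emul_sumr emulCC shift_coef_kappa.
Qed.

End ShiftIdentity.

Theorem lemma3p22 (K : fieldType) (charK0 : [pchar K] =i pred0)
  (n : nat) (n_gt0 : (0 < n)%N) (d : 'I_n -> nat) (l : 'I_n) (s : nat) :
  @Yeq K n d (@bexpr' K n d l s) (@bshift_coef K n d l s).
Proof.
apply: meq_trans (Yeq_bexpr'_shiftq K d l s) _.
exact/meq_aeq/sum_p_shiftqE.
Qed.
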